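(* Let $F$ be a finite field with $q=|F|$. Let $k,m,n\in\mathbb{N}$ with $k\le m$ and $k\le n+1$. Fix $a\in F^k$. Then $$\sum_{\substack{x\in F^{m+n+1}\\ x_{[0,k)}=a}}\ \sum_{\substack{v\in F^{1\times(m+1)}\\ v\ne 0}}[v\,H_{m,n}(x)=0] \;-\; q\sum_{\substack{x\in F^{m+n+1}\\ x_{[0,k)}=a}}\ \sum_{\substack{v\in F^{1\times m}\\ v\ne 0}}[v\,H_{m-1,n+1}(x)=0] = (q-1)q^{2m-k}.$$
   Context: $\mathbb{N}=\{0,1,2,\ldots\}$. $x_{[0,k)}$ denotes $(x_0,\ldots,x_{k-1})$. For a statement $\mathcal{A}$, $[\mathcal{A}]$ is $1$ if true, $0$ if false. For $x=(x_0,\ldots,x_N)\in F^{N+1}$ and integers $p,p'\ge -1$ with $p+p'\le N$, $H_{p,p'}(x)=(x_{i+j})_{0\le i\le p,\,0\le j\le p'}$. *)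

From HB Require Import structures.
From mathcomp Require Import all_boot all_order all_algebra.
Set Implicit Arguments. Unset Strict Implicit. Unset Printing Implicit Defensive.
Import GRing.Theory.
Local Open Scope ring_scope.

(* A vector x in F^N (indices 0..N-1) viewed as a function on nat
   (value 0 outside the range; never used out of range below). *)
Definition seqx (F : finFieldType) (N : nat) (x : {ffun 'I_N -> F}) (j : nat) : F :=
  if insub j is Some i then x i else 0.

(* The Hankel matrix with r rows and c columns, entries x_{i+j}:
   H_{p,p'}(x) = hankel (p+1) (p'+1) x. *)
Definition hankel (F : finFieldType) (r c : nat) (f : nat -> F) : 'M[F]_(r, c) :=
  \matrix_(i < r, j < c) f (i + j)%N.

Definition prefix_eq (F : finFieldType) (k N : nat) (a : 'rV[F]_k)
  (x : {ffun 'I_N -> F}) : bool :=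
  [forall i : 'I_k, seqx x i == a 0 i].

From mathcomp Require Import all_boot all_order all_algebra zify.
Set Implicit Arguments. Unset Strict Implicit. Unset Printing Implicit Defensive.
Import GRing.Theory.
Local Open Scope ring_scope.

(* Proof of Lemma 15.  Exchanging the sums, both sides count, for each
   nonzero row vector v, the number K(v) of x in F^(m+n+1) with prefix a and
   v H(x) = 0.  Split the nonzero v in F^(m+1) by their last coordinate:
   - if v_m <> 0, the equations v H_{m,n}(x) = 0 form a recurrence of order
     m, so x is determined by x_0..x_{m-1}; given the prefix, K(v) = q^(m-k)
     (card_kernel_lead), and there are q^(m+1) - q^m such v;
   - if v = (w, 0) with w <> 0, then v H_{m,n}(x) = w H_{m-1,n}(x), and
     adding t to x_{d+n+1}, d the last nonzero index of w, leaves these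
     n+1 equations unchanged but shifts the next one by w_d t; hence
     K(v) = q K'(w), where K' counts solutions of w H_{m-1,n+1}(x) = 0
     (kernel_count_extra_column).
   The second family cancels the subtracted term, leaving
   (q^(m+1) - q^m) q^(m-k) = (q - 1) q^(2m-k). *)

Lemma sum_indicator_card (T : finType) (P Q : pred T) :
  (\sum_(x | P x) nat_of_bool (Q x))%N = #|[set x | P x && Q x]|.
Proof.
rewrite -sum1_card big_mkcond [RHS]big_mkcond /=; apply: eq_bigr => x _.
by rewrite inE; case: (P x); case: (Q x).
Qed.

(* If F acts on S by injective maps h t that translate f by t, then all
   fibres of f on S have the same size, so #|S| = q * #|S \cap f^-1(0)|. *)
Lemma card_translation_fibre (T : finType) (F : finFieldType)
    (S : {set T}) (f : T -> F) (h : F -> T -> T) :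
  (forall t, injective (h t)) ->
  (forall t x, (h t x \in S) = (x \in S)) ->
  (forall t x, f (h t x) = f x + t) ->
  #|S| = (#|F| * #|[set x in S | f x == 0%R]|)%N.
Proof.
move=> h_inj hS hf.
have fibre c : #|[set x in S | f x == c]| = #|[set x in S | f x == 0]|.
  rewrite -(card_preimset _ (h_inj c)); apply: eq_card => x.
  by rewrite !inE hS hf -subr_eq0 addrK.
rewrite -sum1_card (partition_big f predT) //= -sum_nat_const.
apply: eq_bigr => c _; rewrite -(fibre c) -sum1_card.
by apply: eq_bigl => x; rewrite inE.
Qed.

Section Sequences.
Variable F : finFieldType.

Lemma seqxE N (x : {ffun 'I_N -> F}) (i : 'I_N) : seqx x i = x i.
Proof. by rewrite /seqx valK. Qed.

Lemma seqx_lt N (x : {ffun 'I_N -> F}) j (hj : (j < N)%N) : seqx x j = x (Ordinal hj).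
Proof. by rewrite -seqxE. Qed.

Lemma seqx_out N (x : {ffun 'I_N -> F}) j : (N <= j)%N -> seqx x j = 0.
Proof. by move=> hj; rewrite /seqx insubF // ltnNge hj. Qed.

Lemma prefix_eq_congr N k (a : 'rV[F]_k) (x y : {ffun 'I_N -> F}) :
  (forall i : 'I_N, (i < k)%N -> x i = y i) -> prefix_eq a x = prefix_eq a y.
Proof.
move=> hxy; apply: eq_forallb => i; rewrite /seqx.
by case: insubP => [j _ hj | //]; rewrite hxy // hj.
Qed.

(* Vectors x with prescribed prefix a in F^k and vanishing from index m on
   are freely determined by their coordinates in [k, m). *)
Lemma card_prefix_zero_tail N k m (a : 'rV[F]_k) :
  (k <= m <= N)%N ->
  #|[set x : {ffun 'I_N -> F} |
       prefix_eq a x && [forall i : 'I_N, (m <= i)%N ==> (x i == 0)]]|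
    = (#|F| ^ (m - k))%N.
Proof.
case/andP=> hkm hmN.
pose seqa j := if insub j is Some i then a 0 i else 0.
have seqaE j (hj : (j < k)%N) : seqa j = a 0 (Ordinal hj) by rewrite /seqa insubT.
pose fill (z : {ffun 'I_(m - k) -> F}) : {ffun 'I_N -> F} :=
  [ffun i : 'I_N => if (i < k)%N then seqa i else seqx z (i - k)].
have fill_inj : injective fill.
  move=> z z' /ffunP hzz'; apply/ffunP => j.
  have hj : (j + k < N)%N by have := ltn_ord j; lia.
  have := hzz' (Ordinal hj); rewrite !ffunE /= ltnNge leq_addl /= addnK.
  by rewrite !seqxE.
rewrite -(card_ord (m - k)) -card_ffun -cardsT -(card_imset _ fill_inj).
apply: eq_card => y; rewrite inE; apply/andP/imsetP => [[hp hz] | [z _ ->]].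
  exists [ffun i : 'I_(m - k) => seqx y (i + k)]; first by [].
  apply/ffunP => i; rewrite !ffunE; case: ifP => hik.
    by rewrite (seqaE _ hik) -(eqP (forallP hp (Ordinal hik))) seqxE.
  rewrite /seqx; case: insubP => [j _ hj | hn].
    by rewrite ffunE hj subnK ?valK //; move: (negbT hik); rewrite -leqNgt.
  have hmi : (m <= i)%N by move: hn (negbT hik); rewrite -!leqNgt; lia.
  by rewrite (eqP (implyP (forallP hz i) hmi)).
split; apply/forallP => i.
  have hi : (i < N)%N by have := ltn_ord i; lia.
  rewrite (seqx_lt _ hi) ffunE /= ltn_ord seqaE; apply/eqP; congr (a 0 _).
  exact: val_inj.
by apply/implyP => hmi; rewrite ffunE ifF ?seqx_out //; lia.
Qed.

End Sequences.

Lemma mul_hankel_eq0 (F : finFieldType) r c (v : 'rV[F]_r) (f : nat -> F) :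
  (v *m hankel r c f == 0) =
  [forall j : 'I_c, \sum_(i < r) v 0 i * f (i + j)%N == 0].
Proof.
have entry j : (v *m hankel r c f) 0 j = \sum_(i < r) v 0 i * f (i + j)%N.
  by rewrite mxE; apply: eq_bigr => i _; rewrite mxE.
apply/eqP/forallP => [hv j | hv]; first by rewrite -entry hv mxE.
by apply/rowP => j; rewrite entry mxE; apply/eqP.
Qed.

Definition hankel_kernel_count (F : finFieldType) (N c : nat) k r
    (a : 'rV[F]_k) (v : 'rV[F]_r) : nat :=
  #|[set x : {ffun 'I_N -> F} | prefix_eq a x && (v *m hankel r c (seqx x) == 0)]|.

Lemma sum_hankel_kernel (F : finFieldType) (N c k r : nat) (a : 'rV[F]_k) :
  (\sum_(x : {ffun 'I_N -> F} | prefix_eq a x)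
     \sum_(v : 'rV[F]_r | v != 0%R) nat_of_bool (v *m hankel r c (seqx x) == 0%R))%N
  = (\sum_(v : 'rV[F]_r | v != 0%R) hankel_kernel_count N c a v)%N.
Proof.
by rewrite exchange_big; apply: eq_bigr => v _; exact: sum_indicator_card.
Qed.

Section LeadingCoefficient.
(* When the last coordinate of v is nonzero, the equations v H(x) = 0 form a
   linear recurrence of order m: x_0, ..., x_{m-1} determine all of x. *)
Variables (F : finFieldType) (m n : nat) (v : 'rV[F]_m.+1).
Hypothesis v_lead : v 0 ord_max != 0.
Local Notation X := {ffun 'I_(m + n + 1) -> F}.

(* Keep the first m coordinates; replace the others by the recurrence
   residuals, so that v H(x) = 0 iff the image vanishes from index m on. *)
Definition residuals (x : X) : X :=
  [ffun i : 'I_(m + n + 1) => if (i < m)%N then x i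
     else \sum_(l < m.+1) v 0 l * seqx x (l + (i - m))].

(* The residual map is triangular with invertible diagonal, hence injective. *)
Lemma residuals_inj : injective residuals.
Proof.
move=> x y hxy.
suff agree p i : (i < p)%N -> seqx x i = seqx y i.
  by apply/ffunP => i; rewrite -!seqxE; exact: (agree i.+1 i (ltnSn _)).
elim: p i => [//|p IH] i; rewrite ltnS leq_eqVlt => /orP [/eqP -> | /IH //].
case: (ltnP p (m + n + 1)) => hp; last by rewrite !seqx_out.
have := congr1 (fun g : X => g (Ordinal hp)) hxy; rewrite !ffunE /= !(seqx_lt _ hp).
case: ifP => hpm //.
have hmp : (m <= p)%N by rewrite leqNgt hpm.
rewrite !big_ord_recr /= subnKC // !(seqx_lt _ hp).
have -> : \sum_(l < m) v 0 (widen_ord (leqnSn m) l) * seqx x (l + (p - m)) =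
          \sum_(l < m) v 0 (widen_ord (leqnSn m) l) * seqx y (l + (p - m)).
  by apply: eq_bigr => l _; rewrite IH //; have := ltn_ord l; lia.
by move/addrI/(mulfI v_lead).
Qed.

Lemma card_kernel_lead k (a : 'rV[F]_k) : (k <= m)%N ->
  hankel_kernel_count (m + n + 1) n.+1 a v = (#|F| ^ (m - k))%N.
Proof.
move=> hkm; rewrite -(@card_prefix_zero_tail F (m + n + 1) k m a); last first.
  by rewrite hkm; lia.
rewrite -(card_preimset _ residuals_inj); apply: eq_card => x; rewrite !inE.
congr andb.
  by apply: prefix_eq_congr => i hik; rewrite ffunE ifT //; lia.
rewrite mul_hankel_eq0; apply/forallP/forallP => hx.
  move=> i; apply/implyP => hmi; rewrite ffunE ifF; last by lia.
  have hj : (i - m < n.+1)%N by have := ltn_ord i; lia.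
  exact: (hx (Ordinal hj)).
move=> j; have hj : (m + j < m + n + 1)%N by have := ltn_ord j; lia.
have := implyP (hx (Ordinal hj)) (leq_addr _ _).
by rewrite ffunE /= ifF ?addKn //; lia.
Qed.

End LeadingCoefficient.

Section ZeroLastCoordinate.
Variables (F : finFieldType) (m : nat).
Implicit Types (w : 'rV[F]_m) (v : 'rV[F]_m.+1).

Definition ext (w : 'rV[F]_m) : 'rV[F]_m.+1 :=
  \row_j (if unlift ord_max j is Some i then w 0 i else 0).
Definition restr (v : 'rV[F]_m.+1) : 'rV[F]_m := \row_i v 0 (lift ord_max i).

Lemma ext_max w : ext w 0 ord_max = 0.
Proof. by rewrite mxE unlift_none. Qed.

Lemma ext_lift w i : ext w 0 (lift ord_max i) = w 0 i.
Proof. by rewrite mxE liftK. Qed.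

Lemma restr_ext w : restr (ext w) = w.
Proof. by apply/rowP => i; rewrite mxE ext_lift. Qed.

Lemma ext_restr v : v 0 ord_max = 0 -> ext (restr v) = v.
Proof.
by move=> h; apply/rowP => j; rewrite mxE; case: unliftP => [i -> | ->]; rewrite ?mxE.
Qed.

Lemma ext_inj : injective ext.
Proof. exact: can_inj restr_ext. Qed.

Lemma ext_eq0 w : (ext w == 0) = (w == 0).
Proof.
have ext0 : ext 0 = 0.
  by apply/rowP => j; rewrite !mxE; case: unlift => [i|]; rewrite ?mxE.
by rewrite -(inj_eq ext_inj) ext0.
Qed.

Lemma ext_hankel w c (f : nat -> F) :
  ext w *m hankel m.+1 c f = w *m hankel m c f.
Proof.
apply/rowP => j; rewrite !mxE big_ord_recr /= ext_max mul0r addr0.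
apply: eq_bigr => i _.
have -> : widen_ord (leqnSn m) i = lift ord_max i.
  by apply: val_inj; rewrite /= /bump leqNgt ltn_ord.
by rewrite ext_lift !mxE /= /bump leqNgt ltn_ord.
Qed.

Lemma kernel_count_ext N c k (a : 'rV[F]_k) w :
  hankel_kernel_count N c a (ext w) = hankel_kernel_count N c a w.
Proof. by apply: eq_card => x; rewrite !inE ext_hankel. Qed.

(* The rows with nonzero last coordinate are the complement of the
   q^m extensions by 0. *)
Lemma card_last_nonzero :
  #|[set v : 'rV[F]_m.+1 | v 0 ord_max != 0]| = (#|F| ^ m.+1 - #|F| ^ m)%N.
Proof.
have -> : [set v : 'rV[F]_m.+1 | v 0 ord_max != 0] = ~: (ext @: setT).
  apply/setP => v; rewrite !inE; congr negb; apply/eqP/imsetP => [hv | [w _ ->]].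
    by exists (restr v); rewrite ?inE ?ext_restr.
  exact: ext_max.
have := cardsC (ext @: [set: 'rV[F]_m]).
rewrite card_imset ?cardsT ?card_mx ?mul1n; last exact: ext_inj.
by move=> <-; rewrite addKn.
Qed.

Lemma sum_nonzero_rows_split (g : 'rV[F]_m.+1 -> nat) (c : nat) :
  (forall v, v 0 ord_max != 0 -> g v = c) ->
  (\sum_(v : 'rV[F]_m.+1 | v != 0%R) g v)%N =
  ((#|F| ^ m.+1 - #|F| ^ m) * c + \sum_(w : 'rV[F]_m | w != 0%R) g (ext w))%N.
Proof.
move=> g_lead; rewrite (bigID (fun v => v 0 ord_max == 0)) /= addnC; congr (_ + _)%N.
  rewrite -card_last_nonzero -sum_nat_const; apply: eq_big => [v | v].
    rewrite inE andbC; case: eqP => //= hv.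
    by apply/eqP => v0; apply: hv; rewrite v0 mxE.
  by move=> /andP [_ /g_lead].
rewrite (reindex_onto ext restr) /=; last by move=> v /andP [_ /eqP /ext_restr].
by apply: eq_bigl => w; rewrite ext_eq0 ext_max restr_ext !eqxx !andbT.
Qed.

End ZeroLastCoordinate.

Lemma last_nonzero_coord (F : finFieldType) m (w : 'rV[F]_m) : w != 0 ->
  exists2 d : 'I_m, w 0 d != 0 & forall i : 'I_m, (d < i)%N -> w 0 i = 0.
Proof.
move=> w_neq0; have [i0 wi0] : exists i0, w 0 i0 != 0.
  apply/existsP; apply: contraR w_neq0 => /existsPn w0.
  by apply/eqP/rowP => j; rewrite mxE; apply/eqP; have := w0 j; rewrite negbK.
have [d wd d_max] := @arg_maxnP _ i0 (fun i => w 0 i != 0) val wi0.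
by exists d => // i; rewrite ltnNge; apply: contraNeq => /d_max.
Qed.

Lemma forall_ord_recr c (P : nat -> bool) :
  [forall j : 'I_c.+1, P j] = [forall j : 'I_c, P j] && P c.
Proof.
apply/forallP/andP => [hP | [/forallP hP hc] j].
  split; last exact: (hP ord_max).
  by apply/forallP => j; exact: (hP (widen_ord (leqnSn c) j)).
case: (ltnP j c) => hj; first exact: (hP (Ordinal hj)).
by have -> : j = c :> nat by have := ltn_ord j; lia.
Qed.

Section VanishingLeadingCoefficient.
(* When v = (w, 0) the Hankel equations with n+1 columns only involve the
   first m rows; adding t to the coordinate just after the support of the
   last equation moves the next (n+2-nd) equation through all of F while
   preserving the others.  Hence the count is q times the count with one
   more column. *)
Variables (F : finFieldType) (k m n : nat) (a : 'rV[F]_k) (w : 'rV[F]_m).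
Hypotheses (hkn : (k <= n.+1)%N) (w_neq0 : w != 0).
Local Notation N := (m + n + 1)%N.
Local Notation X := {ffun 'I_N -> F}.

Definition hankel_form (x : X) (j : nat) : F :=
  \sum_(i < m) w 0 i * seqx x (i + j)%N.

Lemma kernel_count_extra_column :
  hankel_kernel_count N n.+1 a w = (#|F| * hankel_kernel_count N n.+2 a w)%N.
Proof.
have [d wd w_above] := last_nonzero_coord w_neq0.
have he : (d + n.+1 < N)%N by have := ltn_ord d; lia.
pose e := Ordinal he.
pose shift (s : F) (x : X) : X := [ffun i => if i == e then x i + s else x i].
have shift_inj s : injective (shift s).
  move=> x y /ffunP hxy; apply/ffunP => i; have := hxy i; rewrite !ffunE.
  by case: ifP => _ // /addIr.
have seqx_shift s x j :
    seqx (shift s x) j = seqx x j + (if j == e then s else 0).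
  rewrite /seqx; case: insubP => [i _ <- | hj].
    by rewrite ffunE val_eqE; case: ifP; rewrite ?addr0.
  by case: eqP => [hje | _]; [rewrite hje ltn_ord in hj | rewrite addr0].
have form_shift_low s x j :
    (j < n.+1)%N -> hankel_form (shift s x) j = hankel_form x j.
  move=> hj; apply: eq_bigr => i _.
  rewrite seqx_shift; case: eqP => hij; rewrite ?addr0 //.
  by rewrite w_above ?mul0r //; move: hij => /= hij; lia.
have form_shift_top s x :
    hankel_form (shift s x) n.+1 = hankel_form x n.+1 + w 0 d * s.
  rewrite /hankel_form; under eq_bigr do rewrite seqx_shift mulrDr.
  rewrite big_split /=; congr (_ + _).
  rewrite (bigD1 d) //= eqxx big1 ?addr0 // => i hi.
  by rewrite eqn_add2r val_eqE (negbTE hi) mulr0.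
pose S := [set x : X | prefix_eq a x && (w *m hankel m n.+1 (seqx x) == 0)].
have S_shift s x : (shift s x \in S) = (x \in S).
  rewrite !inE !mul_hankel_eq0; congr andb.
    apply: prefix_eq_congr => i hik; rewrite ffunE ifF //.
    by apply/eqP => /(congr1 val) /= hie; lia.
  by apply: eq_forallb => j; rewrite -!/(hankel_form _ _) form_shift_low.
rewrite /hankel_kernel_count -/S.
rewrite (card_translation_fibre (h := fun t => shift (t / w 0 d))
                                (f := hankel_form^~ n.+1)) //.
  congr (_ * _)%N; apply: eq_card => x; rewrite !inE !mul_hankel_eq0.
  by rewrite (forall_ord_recr n.+1 (fun j => hankel_form x j == 0)) andbA.
by move=> t x; rewrite form_shift_top mulrC divfK.
Qed.

End VanishingLeadingCoefficient.

Theorem lemma15 (F : finFieldType) (k m n : nat) (a : 'rV[F]_k)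
  (hkm : (k <= m)%N) (hkn : (k <= n.+1)%N) :
  ((\sum_(x : {ffun 'I_(m + n + 1) -> F} | prefix_eq a x)
      \sum_(v : 'rV[F]_(m.+1) | v != 0%R)
        nat_of_bool (v *m hankel m.+1 n.+1 (seqx x) == 0%R))%N)%:Z
  - (#|F|%:Z) *
    ((\sum_(x : {ffun 'I_(m + n + 1) -> F} | prefix_eq a x)
      \sum_(v : 'rV[F]_m | v != 0%R)
        nat_of_bool (v *m hankel m n.+2 (seqx x) == 0%R))%N)%:Z
  = ((#|F| - 1) * #|F| ^ (2 * m - k))%N%:Z.
Proof.
set q := #|F|.
rewrite !sum_hankel_kernel.
rewrite (sum_nonzero_rows_split (c := (q ^ (m - k))%N)); last first.
  by move=> v v_lead; exact: card_kernel_lead.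
have -> : (\sum_(w : 'rV[F]_m | w != 0%R)
              hankel_kernel_count (m + n + 1) n.+1 a (ext w))%N =
          (q * \sum_(w : 'rV[F]_m | w != 0%R) hankel_kernel_count (m + n + 1) n.+2 a w)%N.
  rewrite bigop.big_distrr /=; apply: eq_bigr => w w_neq0.
  by rewrite kernel_count_ext kernel_count_extra_column.
rewrite PoszD PoszM addrK -PoszM; congr Posz.
rewrite expnS -{2}(mul1n (q ^ m)%N) -mulnBl -mulnA -expnD; congr (_ * q ^ _)%N; lia.
Qed.
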